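(* Let $A\in\mathrm{SL}(2,\mathbb R)$ and $\alpha\in\mathbb R$. Then either $\alpha$ is the slope of a vector of $A\Lambda_q$ (i.e. $\alpha=a/q$ for some $(q,a)^T\in A\Lambda_q$ with $q\ne0$), or there exist infinitely many $(q,a)^T\in A\Lambda_q$ with $q>0$ such that $$\left|\alpha-\frac aq\right|\le\frac1{2q^2}.$$
   Context: Fix an integer $q\ge3$ (used only as the index of the group; coordinates of vectors are written $(q,a)^T$ by abuse of notation), let $\lambda_q=2\cos(\pi/q)$, and let $G_q\subset \mathrm{SL}(2,\mathbb R)$ be the Hecke triangle group generated by $S=\begin{pmatrix}0&-1\\1&0\end{pmatrix}$ and $T_q=\begin{pmatrix}1&\lambda_q\\0&1\end{pmatrix}$, acting linearly on $\mathbb R^2$; $\Lambda_q=G_q(1,0)^T$, $A\Lambda_q=\{A\mathbf v:\mathbf v\in\Lambda_q\}$. *)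

From Stdlib Require Import Reals List.
Open Scope R_scope.

Record mat2 := Mat2 { m11 : R; m12 : R; m21 : R; m22 : R }.

Definition mmul (A B : mat2) : mat2 :=
  Mat2 (m11 A * m11 B + m12 A * m21 B) (m11 A * m12 B + m12 A * m22 B)
       (m21 A * m11 B + m22 A * m21 B) (m21 A * m12 B + m22 A * m22 B).

Definition mapply (A : mat2) (v : R * R) : R * R :=
  (m11 A * fst v + m12 A * snd v, m21 A * fst v + m22 A * snd v).

Definition det2 (A : mat2) : R := m11 A * m22 A - m12 A * m21 A.

Definition in_SL2 (A : mat2) : Prop := det2 A = 1.

Definition I2 : mat2 := Mat2 1 0 0 1.
Definition Smat : mat2 := Mat2 0 (-1) 1 0.
Definition Sinv : mat2 := Mat2 0 1 (-1) 0.

Definition lambda (q : nat) : R := 2 * cos (PI / INR q).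
Definition Tmat (q : nat) : mat2 := Mat2 1 (lambda q) 0 1.
Definition Tinv (q : nat) : mat2 := Mat2 1 (- lambda q) 0 1.

Inductive in_Gq (q : nat) : mat2 -> Prop :=
| Gq_id : in_Gq q I2
| Gq_S : forall M, in_Gq q M -> in_Gq q (mmul Smat M)
| Gq_Sinv : forall M, in_Gq q M -> in_Gq q (mmul Sinv M)
| Gq_T : forall M, in_Gq q M -> in_Gq q (mmul (Tmat q) M)
| Gq_Tinv : forall M, in_Gq q M -> in_Gq q (mmul (Tinv q) M).

Definition in_Lambda (q : nat) (v : R * R) : Prop :=
  exists g, in_Gq q g /\ v = mapply g (1, 0).

Definition in_ALambda (q : nat) (A : mat2) (v : R * R) : Prop :=
  exists w, in_Lambda q w /\ v = mapply A w.

Definition infinitely_many (P : R * R -> Prop) : Prop :=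
  ~ exists l : list (R * R), forall v, P v -> In v l.

From Stdlib Require Import Reals List Lra Lia Psatz ZArith Classical.
Open Scope R_scope.

(* Call [(u, v)] a crossing edge if it is a pair of columns of [A g], [g] in [G_q], with positive
   abscissae and with [dev := snd - alpha fst] of opposite signs.  The determinant identity
   [fst u dev v - dev u fst v = 1] then makes one of [u], [v] a good approximation of [alpha]
   whose [|dev|] is at most [3 / (2 (fst u + fst v))].  Multiplying by powers of [T S] turns the
   edge into a [q]-gon from [u] to [v] with coefficients [sin (k pi/q) / sin (pi/q)]; a sign change
   of [dev] along it is a new crossing edge with larger abscissae.  If [alpha] is not a slope,
   [dev] never vanishes on [A Lambda_q], so good approximations with arbitrarily small [|dev|] are
   infinitely many.  A first crossing edge comes from a vertical vector of [A Lambda_q] if there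
   is one, and otherwise from a descent on [(fst w * dev w)^2], which the translations by [T_q]
   lower by [1/4] at each step until they produce one. *)

Lemma exists_nat_gt (r : R) : exists n : nat, r < INR n.
Proof.
  exists (Z.abs_nat (up r)).
  rewrite INR_IZR_INZ, Zabs2Nat.id_abs, abs_IZR.
  destruct (archimed r) as [Hup _]. pose proof (Rle_abs (IZR (up r))). lra.
Qed.

Lemma exists_int_near (r : R) : exists z : Z, Rabs (IZR z - r) <= 1 / 2.
Proof.
  exists (Int_part (r + 1 / 2)). destruct (base_Int_part (r + 1 / 2)).
  apply Rabs_le; lra.
Qed.

Lemma exists_sign_change (f : nat -> R) (i j : nat) :
  (forall k, f k <> 0) -> (i <= j)%nat -> f i * f j <= 0 ->
  exists k, (i <= k < j)%nat /\ f k * f (S k) < 0.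
Proof.
  intros Hnz Hij Hneg. induction j as [|j IH].
  - assert (i = 0%nat) by lia; subst. pose proof (Hnz 0%nat). nra.
  - destruct (Nat.eq_dec i (S j)) as [->|Hi]; [pose proof (Hnz (S j)); nra|].
    destruct (Rle_dec (f i * f j) 0) as [Hle|Hgt].
    + destruct IH as [k [Hk Hfk]]; [lia|assumption|]. exists k; split; [lia|assumption].
    + exists j; split; [lia|]. pose proof (Hnz i). pose proof (Hnz j). pose proof (Hnz (S j)).
      assert (0 < f i * f i) by nra.
      assert (f j * f (S j) * (f i * f i) <= 0) by nra.
      assert (f j * f (S j) <> 0) by (apply Rmult_integral_contrapositive; tauto).
      nra.
Qed.

Lemma exists_lower_bound_abs {T : Type} (f : T -> R) (l : list T) :
  exists d, 0 < d /\ forall x, In x l -> f x <> 0 -> d <= Rabs (f x).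
Proof.
  induction l as [|y l [d [Hd IH]]].
  - exists 1; split; [lra|]. intros x [].
  - destruct (Req_dec (f y) 0) as [Hy|Hy].
    + exists d; split; [assumption|]. intros x [<-|Hx] Hnz; [contradiction|auto].
    + exists (Rmin d (Rabs (f y))). split.
      * apply Rmin_glb_lt; [assumption|apply Rabs_pos_lt; assumption].
      * intros x [<-|Hx] Hnz; [apply Rmin_r|]. eapply Rle_trans; [apply Rmin_l|auto].
Qed.

Lemma approx_of_small_product (alpha x y : R) :
  0 < x -> Rabs (x * (y - alpha * x)) <= 1 / 2 -> Rabs (alpha - y / x) <= 1 / (2 * x ^ 2).
Proof.
  intros Hx H.
  replace (alpha - y / x) with (- (x * (y - alpha * x)) * / x ^ 2) by (field; lra).
  replace (1 / (2 * x ^ 2)) with (1 / 2 * / x ^ 2) by (field; lra).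
  rewrite Rabs_mult, Rabs_Ropp, (Rabs_right (/ x ^ 2)).
  - apply Rmult_le_compat_r; [left; apply Rinv_0_lt_compat; nra|exact H].
  - left; apply Rinv_0_lt_compat; nra.
Qed.

Lemma mat2_ext (M N : mat2) :
  m11 M = m11 N -> m12 M = m12 N -> m21 M = m21 N -> m22 M = m22 N -> M = N.
Proof. destruct M, N; simpl; intros; subst; reflexivity. Qed.

Lemma mmulA (M N P : mat2) : mmul (mmul M N) P = mmul M (mmul N P).
Proof. apply mat2_ext; simpl; ring. Qed.

Lemma mmul1l (M : mat2) : mmul I2 M = M.
Proof. apply mat2_ext; simpl; ring. Qed.

Lemma det2_mmul (M N : mat2) : det2 (mmul M N) = det2 M * det2 N.
Proof. unfold det2; simpl; ring. Qed.

Section HeckeGroup.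

Variable q : nat.

Lemma in_Gq_mmul (g h : mat2) : in_Gq q g -> in_Gq q h -> in_Gq q (mmul g h).
Proof.
  intros Hg Hh; induction Hg; try (rewrite mmulA; constructor; assumption).
  rewrite mmul1l; exact Hh.
Qed.

Lemma in_Gq_S : in_Gq q Smat.
Proof. replace Smat with (mmul Smat I2) by (apply mat2_ext; simpl; ring). do 2 constructor. Qed.

Lemma in_Gq_det (g : mat2) : in_Gq q g -> det2 g = 1.
Proof.
  induction 1; try (rewrite det2_mmul, IHin_Gq; unfold det2; simpl; ring).
  unfold det2, I2; simpl; ring.
Qed.

Definition translation (s : R) : mat2 := Mat2 1 s 0 1.

Lemma in_Gq_translation (z : Z) : in_Gq q (translation (IZR z * lambda q)).
Proof.
  assert (Hnat : forall n : nat, in_Gq q (translation (INR n * lambda q))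
                             /\ in_Gq q (translation (- (INR n * lambda q)))).
  { induction n as [|n [IHp IHm]].
    - replace (translation _) with I2 by (apply mat2_ext; simpl; ring).
      replace (translation (- _)) with I2 by (apply mat2_ext; simpl; ring).
      split; constructor.
    - split.
      + replace (translation _) with (mmul (Tmat q) (translation (INR n * lambda q)))
          by (apply mat2_ext; rewrite ?S_INR; simpl; ring).
        constructor; assumption.
      + replace (translation _) with (mmul (Tinv q) (translation (- (INR n * lambda q))))
          by (apply mat2_ext; rewrite ?S_INR; simpl; ring).
        constructor; assumption. }
  destruct (Z.abs_spec z) as [[Hz Habs]|[Hz Habs]];
    destruct (Hnat (Z.abs_nat z)) as [Hp Hm];
    rewrite INR_IZR_INZ, Zabs2Nat.id_abs, Habs in Hp, Hm.
  - exact Hp.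
  - rewrite opp_IZR, Ropp_mult_distr_l, Ropp_involutive in Hm. exact Hm.
Qed.

End HeckeGroup.
Fixpoint hecke_coeff (l : R) (k : nat) : R :=
  match k with
  | O => 0
  | S O => 1
  | S ((S k') as k1) => l * hecke_coeff l k1 - hecke_coeff l k'
  end.

Lemma hecke_coeff_sin (t : R) (k : nat) :
  sin t <> 0 -> hecke_coeff (2 * cos t) k = sin (INR k * t) / sin t.
Proof.
  intros Ht.
  enough (H : hecke_coeff (2 * cos t) k = sin (INR k * t) / sin t /\
              hecke_coeff (2 * cos t) (S k) = sin (INR (S k) * t) / sin t) by apply H.
  induction k as [|k [IH0 IH1]]; split.
  - simpl. rewrite Rmult_0_l, sin_0. field; assumption.
  - simpl. rewrite Rmult_1_l. field; assumption.
  - exact IH1.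
  - change (hecke_coeff (2 * cos t) (S (S k)))
      with (2 * cos t * hecke_coeff (2 * cos t) (S k) - hecke_coeff (2 * cos t) k).
    rewrite IH0, IH1.
    replace (INR (S (S k)) * t) with (INR (S k) * t + t) by (rewrite (S_INR (S k)); ring).
    replace (INR k * t) with (INR (S k) * t - t) by (rewrite S_INR; ring).
    rewrite sin_plus, sin_minus. field; assumption.
Qed.

Section HeckeCoefficients.

Variable q : nat.
Hypothesis hq : (3 <= q)%nat.

Let t := PI / INR q.

Lemma hecke_angle_bounds : 0 < t /\ 2 * t < PI /\ INR q * t = PI.
Proof.
  assert (Hq : 3 <= INR q) by (replace 3 with (INR 3) by (simpl; ring); apply le_INR; exact hq).
  pose proof PI_RGT_0. unfold t. repeat split.
  - apply Rdiv_lt_0_compat; lra.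
  - apply (Rmult_lt_reg_r (INR q)); [lra|]. field_simplify; [nra|lra].
  - field; lra.
Qed.

Lemma sin_hecke_angle_pos : 0 < sin t.
Proof. destruct hecke_angle_bounds. apply sin_gt_0; lra. Qed.

Lemma lambda_bounds : 0 < lambda q <= 2.
Proof.
  destruct hecke_angle_bounds as [H0 [H2 _]].
  assert (0 < cos t) by (apply cos_gt_0; lra).
  pose proof (COS_bound t). unfold lambda. fold t. lra.
Qed.

Lemma hecke_coeff_lambda (k : nat) : hecke_coeff (lambda q) k = sin (INR k * t) / sin t.
Proof. apply hecke_coeff_sin. pose proof sin_hecke_angle_pos. lra. Qed.

Lemma hecke_coeff_q : hecke_coeff (lambda q) q = 0.
Proof.
  destruct hecke_angle_bounds as [_ [_ Hqt]].
  rewrite hecke_coeff_lambda, Hqt, sin_PI. unfold Rdiv; ring.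
Qed.

Lemma hecke_coeff_pred : hecke_coeff (lambda q) (q - 1) = 1.
Proof.
  destruct hecke_angle_bounds as [_ [_ Hqt]]. pose proof sin_hecke_angle_pos.
  rewrite hecke_coeff_lambda, minus_INR by lia.
  replace ((INR q - INR 1) * t) with (PI - t) by (simpl; lra).
  rewrite sin_PI_x. field; lra.
Qed.

(* On [t, PI - t] the sine is at least [sin t]. *)
Lemma hecke_coeff_ge1 (k : nat) : (1 <= k <= q - 1)%nat -> 1 <= hecke_coeff (lambda q) k.
Proof.
  intros Hk. destruct hecke_angle_bounds as [H0 [H2 Hqt]]. pose proof sin_hecke_angle_pos.
  assert (Hk1 : 1 <= INR k) by (replace 1 with (INR 1) by reflexivity; apply le_INR; lia).
  assert (Hk2 : INR k + 1 <= INR q) by (rewrite <- S_INR; apply le_INR; lia).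
  assert (Hsin : sin t <= sin (INR k * t)).
  { destruct (Rle_dec (INR k * t) (PI / 2)).
    - apply sin_incr_1; nra.
    - rewrite <- (sin_PI_x (INR k * t)). apply sin_incr_1; try lra; nra. }
  rewrite hecke_coeff_lambda. apply (Rmult_le_reg_r (sin t)); [lra|].
  field_simplify; lra.
Qed.

Lemma hecke_coeff_ge0 (k : nat) : (k <= q)%nat -> 0 <= hecke_coeff (lambda q) k.
Proof.
  intros Hk. destruct k as [|k]; [simpl; lra|].
  destruct (Nat.eq_dec (S k) q) as [->|Hq]; [rewrite hecke_coeff_q; lra|].
  pose proof (hecke_coeff_ge1 (S k) ltac:(lia)). lra.
Qed.

End HeckeCoefficients.

Definition vcomb (a : R) (u : R * R) (b : R) (v : R * R) : R * R :=
  (a * fst u + b * fst v, a * snd u + b * snd v).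

Definition vopp (u : R * R) : R * R := (- fst u, - snd u).

Ltac pair_ring :=
  repeat match goal with p : (R * R)%type |- _ => destruct p end;
  unfold vcomb, vopp, mapply; simpl; f_equal; ring.

Section Edges.

Variable q : nat.
Variable A : mat2.

Definition edge (u v : R * R) : Prop :=
  exists g, in_Gq q g /\ u = mapply A (mapply g (1, 0)) /\ v = mapply A (mapply g (0, 1)).

Lemma edge_mmul (g : mat2) (u v u' v' : R * R) : edge u v -> in_Gq q g ->
  u' = vcomb (m11 g) u (m21 g) v -> v' = vcomb (m12 g) u (m22 g) v -> edge u' v'.
Proof.
  intros [h [Hh [-> ->]]] Hg -> ->. exists (mmul h g).
  split; [apply in_Gq_mmul; assumption|]. split; pair_ring.
Qed.

Lemma edge_rotate (u v : R * R) : edge u v -> edge v (vopp u).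
Proof. intros H. apply (edge_mmul Smat u v); [assumption|apply in_Gq_S|pair_ring|pair_ring]. Qed.

Lemma edge_translate (z : Z) (u v : R * R) :
  edge u v -> edge u (vcomb 1 v (IZR z * lambda q) u).
Proof.
  intros H. apply (edge_mmul (translation (IZR z * lambda q)) u v);
    [assumption|apply in_Gq_translation|pair_ring|pair_ring].
Qed.

Lemma edge_T (u v : R * R) : edge u v -> edge u (vcomb 1 v (lambda q) u).
Proof. intros H. pose proof (edge_translate 1 u v H) as H1. rewrite Rmult_1_l in H1. exact H1. Qed.

Lemma edge_in_ALambda_l (u v : R * R) : edge u v -> in_ALambda q A u.
Proof. intros [g [Hg [Hu _]]]. exists (mapply g (1, 0)). split; [exists g|]; auto. Qed.

Lemma edge_in_ALambda_r (u v : R * R) : edge u v -> in_ALambda q A v.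
Proof. intros H. exact (edge_in_ALambda_l _ _ (edge_rotate _ _ H)). Qed.

Lemma in_ALambda_edge (u : R * R) : in_ALambda q A u -> exists v, edge u v.
Proof.
  intros [w [[g [Hg ->]] ->]]. exists (mapply A (mapply g (0, 1))). exists g. auto.
Qed.

Lemma in_ALambda_base : in_ALambda q A (mapply A (1, 0)).
Proof.
  apply (edge_in_ALambda_l _ (mapply A (0, 1))). exists I2.
  split; [constructor|]. split; pair_ring.
Qed.

Lemma edge_det (u v : R * R) : in_SL2 A -> edge u v -> fst u * snd v - snd u * fst v = 1.
Proof.
  intros hA [g [Hg [-> ->]]]. transitivity (det2 A * det2 g).
  - unfold det2, mapply; simpl; ring.
  - rewrite hA, (in_Gq_det q g Hg). ring.
Qed.

(* The orbit of [u] under right multiplication by [T S]; it runs from [u] ([k = 0]) to [v]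
   ([k = q - 1]), see [polygon_vertex_0] and [polygon_vertex_last]. *)
Definition polygon_vertex (u v : R * R) (k : nat) : R * R :=
  vcomb (hecke_coeff (lambda q) (S k)) u (hecke_coeff (lambda q) k) v.

Lemma edge_polygon (u v : R * R) :
  edge u v -> forall k, edge (polygon_vertex u v k) (polygon_vertex u v (S k)).
Proof.
  intros H k. induction k as [|k IH].
  - replace (polygon_vertex u v 0) with u by (unfold polygon_vertex; pair_ring).
    replace (polygon_vertex u v 1) with (vcomb 1 v (lambda q) u)
      by (unfold polygon_vertex; pair_ring).
    exact (edge_T u v H).
  - replace (polygon_vertex u v (S (S k)))
      with (vcomb 1 (vopp (polygon_vertex u v k)) (lambda q) (polygon_vertex u v (S k)))
      by (unfold polygon_vertex; pair_ring).
    exact (edge_T _ _ (edge_rotate _ _ IH)).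
Qed.

Lemma polygon_vertex_0 (u v : R * R) : polygon_vertex u v 0 = u.
Proof. unfold polygon_vertex; pair_ring. Qed.

Lemma polygon_vertex_last (u v : R * R) : (3 <= q)%nat -> polygon_vertex u v (q - 1) = v.
Proof.
  intros hq. unfold polygon_vertex. replace (S (q - 1)) with q by lia.
  rewrite hecke_coeff_q, hecke_coeff_pred by exact hq. pair_ring.
Qed.

End Edges.

Section Approximation.

Variable q : nat.
Variable A : mat2.
Variable alpha : R.
Hypothesis hq : (3 <= q)%nat.
Hypothesis hA : in_SL2 A.
Hypothesis not_slope :
  forall v, in_ALambda q A v -> fst v <> 0 -> alpha <> snd v / fst v.

Local Notation edge := (edge q A).
Local Notation polygon_vertex := (polygon_vertex q).

Definition dev (v : R * R) : R := snd v - alpha * fst v.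

Lemma dev_vcomb (a b : R) (u v : R * R) : dev (vcomb a u b v) = a * dev u + b * dev v.
Proof. unfold dev, vcomb; simpl; ring. Qed.

Lemma dev_vopp (u : R * R) : dev (vopp u) = - dev u.
Proof. unfold dev, vopp; simpl; ring. Qed.

Lemma edge_det_dev (u v : R * R) : edge u v -> fst u * dev v - dev u * fst v = 1.
Proof. intros H. rewrite <- (edge_det q A u v hA H). unfold dev; ring. Qed.

Lemma dev_neq0 (w : R * R) : in_ALambda q A w -> dev w <> 0.
Proof.
  intros Hw Hd. destruct (Req_dec (fst w) 0) as [H0|H0].
  - destruct (in_ALambda_edge q A w Hw) as [v Hv].
    pose proof (edge_det_dev w v Hv) as Hdet. rewrite H0, Hd in Hdet. lra.
  - apply (not_slope w Hw H0). unfold dev in Hd.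
    replace (snd w) with (alpha * fst w) by lra. field; exact H0.
Qed.

Definition straddle (u v : R * R) : Prop :=
  edge u v /\ fst u * fst v * (dev u * dev v) < 0.

Definition crossing (u v : R * R) : Prop :=
  edge u v /\ 0 < fst u /\ 0 < fst v /\ dev u * dev v < 0.

Lemma polygon_sign_change (u v : R * R) (i j : nat) : edge u v -> (i <= j)%nat ->
  dev (polygon_vertex u v i) * dev (polygon_vertex u v j) <= 0 ->
  exists k, (i <= k < j)%nat /\ dev (polygon_vertex u v k) * dev (polygon_vertex u v (S k)) < 0.
Proof.
  intros H. apply (exists_sign_change (fun k => dev (polygon_vertex u v k))). intros k.
  exact (dev_neq0 _ (edge_in_ALambda_l q A _ _ (edge_polygon q A u v H k))).
Qed.

(* The translates [v + n lambda u0] of a neighbour of a vertical [u0] share its abscissa, and the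
   polygon between two consecutive ones has a sign change of [dev]. *)
Lemma straddle_of_vertical (u0 : R * R) :
  in_ALambda q A u0 -> fst u0 = 0 -> exists u v, straddle u v.
Proof.
  intros Hu0 Hx0. destruct (in_ALambda_edge q A u0 Hu0) as [v Hv].
  pose proof (edge_det_dev u0 v Hv) as Hdet. rewrite Hx0 in Hdet.
  assert (Hd0 : dev u0 <> 0) by (intro Z; rewrite Z in Hdet; lra).
  assert (Hxv : fst v <> 0) by (intro Z; rewrite Z in Hdet; lra).
  destruct (lambda_bounds q hq) as [Hl _].
  set (r := - dev v / (lambda q * dev u0)).
  destruct (base_Int_part r) as [Hr1 Hr2]. set (z := Int_part r) in *.
  set (v' := vcomb 1 v (IZR z * lambda q) u0).
  pose proof (edge_translate q A z u0 v Hv) as Hv'. fold v' in Hv'.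
  assert (Hdev : forall s, dev (vcomb 1 v (s * lambda q) u0) = lambda q * dev u0 * (s - r)).
  { intros s. rewrite dev_vcomb. unfold r. field. split; lra. }
  assert (Hfirst : dev (polygon_vertex u0 v' 1) = lambda q * dev u0 * (IZR z + 1 - r)).
  { rewrite <- Hdev. unfold polygon_vertex, v'. f_equal. pair_ring. }
  assert (Hlast : dev (polygon_vertex u0 v' (q - 1)) = lambda q * dev u0 * (IZR z - r))
    by (rewrite polygon_vertex_last by exact hq; apply Hdev).
  destruct (polygon_sign_change u0 v' 1 (q - 1) Hv') as [k [Hk Hdk]]; [lia| |].
  { rewrite Hfirst, Hlast.
    replace (_ * _) with ((lambda q * dev u0) ^ 2 * ((IZR z + 1 - r) * (IZR z - r))) by ring.
    assert (0 <= (lambda q * dev u0) ^ 2) by apply pow2_ge_0.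
    assert ((IZR z + 1 - r) * (IZR z - r) <= 0) by nra. nra. }
  exists (polygon_vertex u0 v' k), (polygon_vertex u0 v' (S k)).
  split; [apply edge_polygon; exact Hv'|].
  assert (Hx : forall j, fst (polygon_vertex u0 v' j) = hecke_coeff (lambda q) j * fst v)
    by (intros j; unfold polygon_vertex, v', vcomb; simpl; rewrite Hx0; ring).
  rewrite !Hx.
  pose proof (hecke_coeff_ge1 q hq k ltac:(lia)).
  pose proof (hecke_coeff_ge1 q hq (S k) ltac:(lia)).
  assert (0 < fst v * fst v) by (pose proof (Rsqr_pos_lt _ Hxv); unfold Rsqr in *; lra).
  set (ck := hecke_coeff (lambda q) k) in *. set (cSk := hecke_coeff (lambda q) (S k)) in *.
  replace (ck * fst v * (cSk * fst v)) with (ck * cSk * (fst v * fst v)) by ring.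
  assert (0 < ck * cSk * (fst v * fst v)) by (apply Rmult_lt_0_compat; nra).
  nra.
Qed.

(* For a neighbour [v] of [w], [fst w * dev w] times [fst * dev] of [v + s w] is a monic quadratic
   in [s * fst w * dev w] of discriminant [1]; at the best translate [s] in [lambda q Z] it is
   either negative or at most [(fst w * dev w)^2 - 1/4], because [lambda q <= 2]. *)
Lemma straddle_or_descent (w : R * R) : in_ALambda q A w -> fst w <> 0 ->
  (exists u v, straddle u v) \/
  exists w', in_ALambda q A w' /\ (fst w' * dev w') ^ 2 <= (fst w * dev w) ^ 2 - 1 / 4.
Proof.
  intros Hw Hx. destruct (in_ALambda_edge q A w Hw) as [v Hv].
  pose proof (edge_det_dev w v Hv) as Hdet.
  set (t := fst w * dev w).
  assert (Ht : t <> 0)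
    by (apply Rmult_integral_contrapositive; split; [exact Hx|exact (dev_neq0 w Hw)]).
  destruct (lambda_bounds q hq) as [Hl0 Hl2].
  assert (Hquad : forall s, t * (fst (vcomb 1 v s w) * dev (vcomb 1 v s w))
                            = (s * t + dev w * fst v + 1 / 2) ^ 2 - 1 / 4).
  { intros s. rewrite dev_vcomb.
    assert (E : t * (fst (vcomb 1 v s w) * (1 * dev v + s * dev w))
                - ((s * t + dev w * fst v + 1 / 2) ^ 2 - 1 / 4)
                = (dev w * fst v + s * t) * (fst w * dev v - dev w * fst v - 1))
      by (unfold t, vcomb; simpl; field).
    rewrite Hdet in E. lra. }
  set (r := - (dev w * fst v + 1 / 2) / (lambda q * t)).
  destruct (exists_int_near r) as [z Hz].
  set (vz := vcomb 1 v (IZR z * lambda q) w).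
  assert (Hvz : edge w vz) by (apply edge_translate; exact Hv).
  set (p := t * (fst vz * dev vz)).
  assert (Hp : p <= t ^ 2 - 1 / 4).
  { unfold p, vz. rewrite Hquad.
    replace (IZR z * lambda q * t + dev w * fst v + 1 / 2) with (lambda q * t * (IZR z - r))
      by (unfold r; field; split; lra).
    pose proof (pow_maj_Rabs (1 / 2) (IZR z - r) 2 Hz).
    assert (0 <= t ^ 2) by apply pow2_ge_0.
    assert (lambda q ^ 2 <= 4) by nra.
    replace ((lambda q * t * (IZR z - r)) ^ 2) with (lambda q ^ 2 * (t ^ 2 * (IZR z - r) ^ 2))
      by ring.
    assert (t ^ 2 * (IZR z - r) ^ 2 <= t ^ 2 / 4) by nra.
    nra. }
  destruct (Rlt_dec p 0) as [Hneg|Hnn].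
  - left. exists w, vz. split; [exact Hvz|].
    replace (fst w * fst vz * (dev w * dev vz)) with p by (unfold p, t; ring). exact Hneg.
  - right. exists vz. split; [exact (edge_in_ALambda_r q A w vz Hvz)|].
    apply Rnot_lt_le in Hnn.
    assert (Ht2 : 0 < t ^ 2) by (pose proof (Rsqr_pos_lt t Ht); unfold Rsqr in *; nra).
    assert (Hp2 : (fst vz * dev vz) ^ 2 * t ^ 2 = p ^ 2) by (unfold p; ring).
    apply (Rmult_le_reg_r (t ^ 2)); [exact Ht2|]. rewrite Hp2. nra.
Qed.

Lemma straddle_exists : exists u v, straddle u v.
Proof.
  assert (Hdescent : forall (n : nat) w, in_ALambda q A w ->
            (fst w * dev w) ^ 2 < INR n / 4 -> exists u v, straddle u v).
  { induction n as [|n IH]; intros w Hw Hlt.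
    - simpl in Hlt. pose proof (pow2_ge_0 (fst w * dev w)). lra.
    - destruct (Req_dec (fst w) 0) as [H0|H0]; [exact (straddle_of_vertical w Hw H0)|].
      destruct (straddle_or_descent w Hw H0) as [Hs|[w' [Hw' Hle]]]; [exact Hs|].
      apply (IH w' Hw'). rewrite S_INR in Hlt. lra. }
  set (w0 := mapply A (1, 0)).
  destruct (exists_nat_gt (4 * (fst w0 * dev w0) ^ 2)) as [n Hn].
  apply (Hdescent n w0 (in_ALambda_base q A)). lra.
Qed.

Lemma straddle_rotate (u v : R * R) : straddle u v -> straddle v (vopp u).
Proof.
  intros [H Hp]. split; [exact (edge_rotate q A u v H)|].
  rewrite dev_vopp. simpl. lra.
Qed.

Lemma crossing_of_straddle (u v : R * R) : straddle u v -> exists u' v', crossing u' v'.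
Proof.
  assert (Hpos : forall a b, straddle a b -> 0 < fst a -> 0 < fst b -> crossing a b).
  { intros a b [H Hp] Ha Hb. repeat split; [exact H|exact Ha|exact Hb|].
    assert (0 < fst a * fst b) by nra. nra. }
  intros H. pose proof (straddle_rotate _ _ H) as H1.
  pose proof (straddle_rotate _ _ H1) as H2. pose proof (straddle_rotate _ _ H2) as H3.
  pose proof (proj2 H) as Hp.
  assert (fst u <> 0) by (intro Z; rewrite Z in Hp; lra).
  assert (fst v <> 0) by (intro Z; rewrite Z in Hp; lra).
  destruct (Rlt_dec 0 (fst u)), (Rlt_dec 0 (fst v)).
  - exists u, v. apply Hpos; assumption.
  - exists (vopp v), (vopp (vopp u)). apply Hpos; [exact H3|simpl; lra|simpl; lra].
  - exists v, (vopp u). apply Hpos; [exact H1|assumption|simpl; lra].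
  - exists (vopp u), (vopp v). apply Hpos; [exact H2|simpl; lra|simpl; lra].
Qed.

(* The interior Hecke coefficients are at least [1]: this makes the abscissae grow. *)
Lemma crossing_refine (u v : R * R) : crossing u v ->
  exists u' v', crossing u' v' /\ Rmin (fst u) (fst v) <= Rmin (fst u') (fst v') /\
    fst u + fst v + Rmin (fst u) (fst v) <= fst u' + fst v'.
Proof.
  intros [H [Hu [Hv Hd]]].
  destruct (polygon_sign_change u v 0 (q - 1) H) as [k [Hk Hdk]]; [lia| |].
  { rewrite polygon_vertex_0, polygon_vertex_last by exact hq. lra. }
  exists (polygon_vertex u v k), (polygon_vertex u v (S k)).
  set (c := hecke_coeff (lambda q)).
  assert (Hc0 : 0 <= c k) by (apply hecke_coeff_ge0; lia).
  assert (Hc1 : 1 <= c (S k)) by (apply hecke_coeff_ge1; lia).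
  assert (Hc2 : 0 <= c (S (S k))) by (apply hecke_coeff_ge0; lia).
  assert (Hc02 : 1 <= c k + c (S (S k))).
  { destruct k as [|k].
    - assert (1 <= c 2%nat) by (apply hecke_coeff_ge1; lia). lra.
    - assert (1 <= c (S k)) by (apply hecke_coeff_ge1; lia). lra. }
  assert (Hx : forall j, fst (polygon_vertex u v j) = c (S j) * fst u + c j * fst v)
    by reflexivity.
  pose proof (Rmin_l (fst u) (fst v)). pose proof (Rmin_r (fst u) (fst v)).
  set (m := Rmin (fst u) (fst v)) in *.
  assert (Hxk : fst u <= fst (polygon_vertex u v k)) by (rewrite Hx; nra).
  assert (HxSk : fst v <= fst (polygon_vertex u v (S k))) by (rewrite Hx; nra).
  repeat split.
  - apply edge_polygon; exact H.
  - lra.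
  - lra.
  - exact Hdk.
  - apply Rmin_glb; lra.
  - assert (0 < m) by (apply Rmin_glb_lt; assumption).
    rewrite !Hx.
    assert (0 <= c k * (fst v - m)) by (apply Rmult_le_pos; lra).
    assert (0 <= c (S (S k)) * (fst u - m)) by (apply Rmult_le_pos; lra).
    nra.
Qed.

Lemma crossing_unbounded (u0 v0 : R * R) : crossing u0 v0 ->
  forall B, exists u v, crossing u v /\ B < fst u + fst v.
Proof.
  intros H0 B. set (m := Rmin (fst u0) (fst v0)).
  assert (Hm : 0 < m) by (destruct H0 as [_ [? [? _]]]; apply Rmin_glb_lt; assumption).
  assert (Hgrow : forall n : nat, exists u v,
             crossing u v /\ m <= Rmin (fst u) (fst v) /\ INR n * m <= fst u + fst v).
  { induction n as [|n [u [v [Huv [Hmin Hsum]]]]].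
    - exists u0, v0. split; [exact H0|]. destruct H0 as [_ [? [? _]]].
      split; [apply Rle_refl|simpl; lra].
    - destruct (crossing_refine u v Huv) as [u' [v' [H' [Hmin' Hsum']]]].
      exists u', v'. rewrite S_INR. split; [exact H'|split; lra]. }
  destruct (exists_nat_gt (B / m)) as [n Hn]. destruct (Hgrow n) as [u [v [Huv [_ Hs]]]].
  exists u, v. split; [exact Huv|].
  apply (Rmult_lt_compat_r m) in Hn; [|exact Hm].
  replace (B / m * m) with B in Hn by (field; lra). lra.
Qed.

(* For a crossing edge the determinant [fst u * dev v + (- dev u) * fst v = 1] is a sum of two
   positive terms, so their product is at most [1/4]. *)
Lemma crossing_good_vertex (u v : R * R) : crossing u v ->
  exists w, in_ALambda q A w /\ 0 < fst w /\ Rabs (fst w * dev w) <= 1 / 2 /\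
    Rabs (dev w) * (fst u + fst v) <= 3 / 2.
Proof.
  intros [H [Hu [Hv Hd]]]. pose proof (edge_det_dev u v H) as Hdet.
  assert (Hsign : dev u < 0 < dev v) by nra.
  assert (Hprod : - (fst u * dev u) * (fst v * dev v) <= 1 / 4).
  { pose proof (pow2_ge_0 (fst u * dev v + dev u * fst v)). nra. }
  destruct (Rle_lt_dec (- (fst u * dev u)) (1 / 2)).
  - exists u. split; [exact (edge_in_ALambda_l q A u v H)|].
    rewrite Rabs_left by nra. rewrite Rabs_left by lra.
    repeat split; [exact Hu|lra|nra].
  - exists v. split; [exact (edge_in_ALambda_r q A u v H)|].
    assert (Hpos : 0 < fst v * dev v) by nra.
    assert (fst v * dev v <= 1 / 2) by nra.
    rewrite Rabs_right by lra. rewrite Rabs_right by lra.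
    repeat split; [exact Hv|lra|nra].
Qed.

End Approximation.

Theorem mainTheorem17 (q : nat) (hq : (3 <= q)%nat) (A : mat2) (hA : in_SL2 A)
  (alpha : R) :
  (exists v : R * R, in_ALambda q A v /\ fst v <> 0 /\ alpha = snd v / fst v)
  \/
  infinitely_many (fun v : R * R =>
    in_ALambda q A v /\ 0 < fst v /\
    Rabs (alpha - snd v / fst v) <= 1 / (2 * (fst v) ^ 2)).
Proof.
  destruct (classic (exists v, in_ALambda q A v /\ fst v <> 0 /\ alpha = snd v / fst v))
    as [Hslope|Hnot]; [left; exact Hslope|right].
  assert (not_slope : forall v, in_ALambda q A v -> fst v <> 0 -> alpha <> snd v / fst v)
    by (intros v Hv Hx Heq; apply Hnot; exists v; auto).
  intros [l Hl].
  destruct (exists_lower_bound_abs (dev alpha) l) as [d [Hd Hdl]].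
  destruct (straddle_exists q A alpha hq hA not_slope) as [u0 [v0 H0]].
  destruct (crossing_of_straddle q A alpha u0 v0 H0) as [u1 [v1 H1]].
  destruct (crossing_unbounded q A alpha hq hA not_slope u1 v1 H1 (3 / (2 * d)))
    as [u [v [H Hbig]]].
  destruct (crossing_good_vertex q A alpha hA u v H) as [w [Hw [Hx [Hgood Hsmall]]]].
  assert (Hin : In w l) by (apply Hl; repeat split; [exact Hw|exact Hx|];
                            apply approx_of_small_product; assumption).
  pose proof (Hdl w Hin (dev_neq0 q A alpha hA not_slope w Hw)).
  assert (d * (fst u + fst v) <= 3 / 2) by nra.
  apply (Rmult_lt_compat_r d) in Hbig; [|exact Hd].
  replace (3 / (2 * d) * d) with (3 / 2) in Hbig by (field; lra). lra.
Qed.
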